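(* Let $(\psi_1;\phi_1,\phi_2)\in\mathbb{R}^3$ be coordinates on the coroot space of the semisimple Lie algebra $\mathrm{A}_1\oplus\mathrm{A}_2$ (basis of fundamental coroots), and consider the open dual fundamental Weyl chamber $$W=\{\psi_1>0,\ 2\phi_1-\phi_2>0,\ -\phi_1+2\phi_2>0\}.$$ Consider the hyperplane arrangement $\mathrm{I}(\mathrm{A}_1\oplus\mathrm{A}_2,(\mathbf{1},\mathbf{3})\oplus(\mathbf{2},\mathbf{3}))$ inside $W$, i.e. the arrangement of the hyperplanes $\{\phi:\ \varpi\cdot\phi=0\}$ for $\varpi$ ranging over the weights of $(\mathbf{1},\mathbf{3})\oplus(\mathbf{2},\mathbf{3})$. Then this arrangement has exactly eight chambers (connected components of the complement of the hyperplanes in $W$). With respect to the ordered list of linear forms $$\big(-\phi_1+\phi_2,\ -\psi_1-\phi_1+\phi_2,\ -\psi_1+\phi_1,\ \psi_1-\phi_2,\ \psi_1-\phi_1+\phi_2\big)$$ (these are the forms $\varpi\cdot\phi$ for the weights $(0;-1,1)$, $(-1;-1,1)$, $(-1;1,0)$, $(1;0,-1)$, $(1;-1,1)$), the eight chambers have the following sign vectors and explicit descriptions: - $1$: $(+,-,-,+,+)$, $0<\phi_2-\phi_1<\phi_1<\phi_2<\psi_1$; - $2$: $(+,-,-,-,+)$, $0<\phi_2-\phi_1<\phi_1<\psi_1<\phi_2$; - $3$: $(+,-,+,-,+)$, $0<\phi_2-\phi_1<\psi_1<\phi_1<\phi_2$; - $4$: $(+,+,+,-,+)$, $0<\psi_1<\phi_2-\phi_1<\phi_1<\phi_2$;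 - $1'$: $(-,-,-,+,+)$, $0<\phi_1-\phi_2<\phi_2<\phi_1<\psi_1$; - $2'$: $(-,-,+,+,+)$, $0<\phi_1-\phi_2<\phi_2<\psi_1<\phi_1$; - $3'$: $(-,-,+,-,+)$, $0<\phi_1-\phi_2<\psi_1<\phi_2<\phi_1$; - $4'$: $(-,-,+,-,-)$, $0<\psi_1<\phi_1-\phi_2<\phi_2<\phi_1$. The adjacency graph of the chambers (two chambers adjacent when they share a codimension-one wall) is the hexagon $1-2-3-3'-2'-1'-1$ together with the two extra edges $3-4$ and $3'-4'$.
   Context: Weights are written $(a;b,c)$ where $(a)$ is a weight of $\mathrm{A}_1$ and $(b,c)$ a weight of $\mathrm{A}_2$, both in the basis of fundamental weights; the pairing of a weight $\varpi=(a;b,c)$ with $\phi=(\psi_1;\phi_1,\phi_2)$ is $\varpi\cdot\phi=a\psi_1+b\phi_1+c\phi_2$. The weights of the fundamental $\mathbf{2}$ of $\mathrm{A}_1$ are $1,-1$; those of the fundamental $\mathbf{3}$ of $\mathrm{A}_2$ are $(1,0),(-1,1),(0,-1)$. Hence the weights of $(\mathbf{1},\mathbf{3})$ are $(0;1,0),(0;-1,1),(0;0,-1)$ and those of the bifundamental $(\mathbf{2},\mathbf{3})$ are $(\pm1;1,0),(\pm1;-1,1),(\pm1;0,-1)$. *)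

From HB Require Import structures.
From mathcomp Require Import all_boot all_order all_algebra.
From mathcomp Require Import all_classical all_reals all_analysis.
Set Implicit Arguments. Unset Strict Implicit. Unset Printing Implicit Defensive.
Import Order.TTheory GRing.Theory Num.Theory.
Local Open Scope ring_scope.
Import numFieldNormedType.Exports.
Local Open Scope classical_set_scope.

Section Arrangement.
Variable R : realType.

Notation pt := (R * R * R)%type.
Definition psi1 (x : pt) : R := x.1.1.
Definition phi1 (x : pt) : R := x.1.2.
Definition phi2 (x : pt) : R := x.2.

(* weight (a;b,c) in the fundamental-weight basis *)
Definition weight := (int * int * int)%type.

Definition pairing (w : weight) (x : pt) : R :=
  w.1.1%:~R * psi1 x + w.1.2%:~R * phi1 x + w.2%:~R * phi2 x.

(* weights of (1,3) (+) (2,3) *)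
Definition weights_R : seq weight :=
  [:: (0, 1, 0); (0, -1, 1); (0, 0, -1);
      (1, 1, 0); (1, -1, 1); (1, 0, -1);
      (-1, 1, 0); (-1, -1, 1); (-1, 0, -1)]%Z.

Definition Weyl : set pt :=
  [set x | 0 < psi1 x /\ 0 < 2 * phi1 x - phi2 x /\ 0 < - phi1 x + 2 * phi2 x].

Definition complement : set pt :=
  Weyl `&` [set x | forall w, w \in weights_R -> pairing w x != 0].

Definition is_chamber (K : set pt) : Prop :=
  exists2 x, complement x & K = connected_component complement x.

Definition lin (a q : pt) : R :=
  a.1.1 * q.1.1 + a.1.2 * q.1.2 + a.2 * q.2.

(* Two chambers are adjacent when they are distinct and share a
   codimension-one wall: the intersection of their closures contains a
   relatively open piece of an affine plane. *)
Definition chambers_adjacent (K1 K2 : set pt) : Prop :=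
  K1 <> K2 /\
  exists (a : pt) (c : R) (p : pt),
    a <> (0, 0, 0) /\ lin a p = c /\
    \forall q \near p, lin a q = c -> (closure K1 `&` closure K2) q.

End Arrangement.

Inductive label := L1 | L2 | L3 | L4 | L1' | L2' | L3' | L4'.

Definition chamber_of (R : realType) (l : label) : set (R * R * R)%type :=
  match l with
  | L1  => [set x | 0 < phi2 x - phi1 x /\ phi2 x - phi1 x < phi1 x /\ phi1 x < phi2 x /\ phi2 x < psi1 x]
  | L2  => [set x | 0 < phi2 x - phi1 x /\ phi2 x - phi1 x < phi1 x /\ phi1 x < psi1 x /\ psi1 x < phi2 x]
  | L3  => [set x | 0 < phi2 x - phi1 x /\ phi2 x - phi1 x < psi1 x /\ psi1 x < phi1 x /\ phi1 x < phi2 x]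
  | L4  => [set x | 0 < psi1 x /\ psi1 x < phi2 x - phi1 x /\ phi2 x - phi1 x < phi1 x /\ phi1 x < phi2 x]
  | L1' => [set x | 0 < phi1 x - phi2 x /\ phi1 x - phi2 x < phi2 x /\ phi2 x < phi1 x /\ phi1 x < psi1 x]
  | L2' => [set x | 0 < phi1 x - phi2 x /\ phi1 x - phi2 x < phi2 x /\ phi2 x < psi1 x /\ psi1 x < phi1 x]
  | L3' => [set x | 0 < phi1 x - phi2 x /\ phi1 x - phi2 x < psi1 x /\ psi1 x < phi2 x /\ phi2 x < phi1 x]
  | L4' => [set x | 0 < psi1 x /\ psi1 x < phi1 x - phi2 x /\ phi1 x - phi2 x < phi2 x /\ phi2 x < phi1 x]
  end.

Definition sign_forms : seq weight :=
  [:: (0, -1, 1); (-1, -1, 1); (-1, 1, 0); (1, 0, -1); (1, -1, 1)]%Z.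

(* sign vectors (true = +, false = -) *)
Definition sign_vector (l : label) : seq bool :=
  match l with
  | L1  => [:: true; false; false; true; true]
  | L2  => [:: true; false; false; false; true]
  | L3  => [:: true; false; true; false; true]
  | L4  => [:: true; true; true; false; true]
  | L1' => [:: false; false; false; true; true]
  | L2' => [:: false; false; true; true; true]
  | L3' => [:: false; false; true; false; true]
  | L4' => [:: false; false; true; false; false]
  end.

Definition edge0 (l m : label) : bool :=
  match l, m with
  | L1, L2 | L2, L3 | L3, L3' | L3', L2' | L2', L1' | L1', L1
  | L3, L4 | L3', L4' => true
  | _, _ => false
  end.
Definition edge (l m : label) : bool := edge0 l m || edge0 m l.

From HB Require Import structures.
From mathcomp Require Import all_boot all_order all_algebra.
From mathcomp Require Import all_classical all_reals all_analysis.
From mathcomp Require Import ring lra.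
Import Order.TTheory GRing.Theory Num.Theory.
Local Open Scope ring_scope.
Import numFieldNormedType.Exports.
Local Open Scope classical_set_scope.

(* The eight sets are open simplicial cones, cut out by three linear forms each, hence connected.
   Off the hyperplanes, the Weyl chamber inequalities together with the signs of the five listed
   forms decide which of the eight cones contains a point, and these signs are constant on every
   connected subset of the complement; so the connected components are exactly the eight cones.
   Two cones whose sign vectors differ in a single form share a wall on the hyperplane of that
   form.  If they differ in two forms, both forms vanish on the intersection of the closures,
   which therefore lies in a line and contains no open piece of a plane. *)

Section Topology.
Context {R : realType}.

Lemma connected_sign_constant {T : topologicalType} {f : T -> R} {C : set T} {x y} :
  connected C -> continuous f -> (forall z, C z -> f z != 0) -> C x -> C y ->
  (0 < f x) = (0 < f y).
Proof.
move=> cC cf f_neq0 Cx Cy.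
have /connected_intervalP fC : connected (f @` C).
  exact: connected_continuous_connected cC (continuous_subspaceT cf).
suff sign_stable u v : C u -> C v -> 0 < f u -> 0 < f v.
  by apply/idP/idP; apply: sign_stable.
move=> Cu Cv fu_gt0; rewrite ltNge; apply/negP => fv_le0.
have fv_lt0 : f v < 0 by rewrite lt_neqAle fv_le0 f_neq0.
have [z Cz fz0] : (f @` C) 0.
  by apply: (fC (f v) (f u)); [exists v | exists u | rewrite !ltW].
by have := f_neq0 z Cz; rewrite fz0 eqxx.
Qed.

Lemma closure_sub_closed {T : topologicalType} {A B : set T} :
  closed B -> A `<=` B -> closure A `<=` B.
Proof. by move=> cB AB; rewrite closureE; apply: smallest_sub. Qed.

Context {V : normedModType R}.

Lemma segment_continuous (x v : V) : continuous (fun t : R => x + t *: v).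
Proof.
move=> t; apply: (@continuousD R V R (fun=> x) (fun t => t *: v) t).
  exact: cvg_cst.
exact: (@continuousZr_tmp R V R id); exact: cvg_id.
Qed.

Lemma star_connected {K : set V} {x : V} :
  K x -> (forall z, K z -> forall t, 0 <= t <= 1 -> K (x + t *: (z - x))) ->
  connected K.
Proof.
move=> Kx Kstar.
have -> : K = \bigcup_(z in K) [set x + t *: (z - x) | t in `[0, 1]].
  apply/seteqP; split=> [z Kz|_ [z Kz [t t01 <-]]]; last exact: Kstar.
  exists z => //; exists 1; last by rewrite scale1r addrC subrK.
  by rewrite /= in_itv /= ler01 lexx.
apply: bigcup_connected.
  exists x => z _; exists 0; last by rewrite scale0r addr0.
  by rewrite /= in_itv /= ler01 lexx.
move=> z _; exact: connected_continuous_connected (@segment_connected R 0 1)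
  (continuous_subspaceT (segment_continuous x (z - x))).
Qed.

Lemma closure_segment {K : set V} {q : V} (z : V) :
  (forall t, 0 < t <= 1 -> K (q + t *: (z - q))) -> closure K q.
Proof.
move=> Kseg B Bq.
have seg_q : (fun t : R => q + t *: (z - q)) @ 0^'+ --> q.
  apply: cvg_at_right_filter.
  by have := segment_continuous q (z - q) 0; rewrite /continuous_at scale0r addr0.
have /filter_ex [t [Kt Bt]] :
    \forall t \near 0^'+, K (q + t *: (z - q)) /\ B (q + t *: (z - q)).
  near=> t; split; last by near: t; exact: seg_q.
  apply: Kseg; apply/andP; split; near: t; [exact: nbhs_right_gt|exact: nbhs_right_le].
by exists (q + t *: (z - q)).
Unshelve. all: by end_near. Qed.

End Topology.

Section Forms.
Context {R : realType}.
Notation pt := (R * R * R)%type.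
Implicit Types a f g q v x y z : pt.

Lemma lin_continuous a : continuous (lin a).
Proof.
move=> q; apply: cvgD; [apply: cvgD|]; apply: cvgMl_tmp.
- exact: (cvg_comp _ _ cvg_fst cvg_fst).
- exact: (cvg_comp _ _ cvg_fst cvg_snd).
- exact: cvg_snd.
Qed.

Lemma closed_lin_ge0 a : closed [set x | 0 <= lin a x].
Proof. by have := (continuous_closedP _).1 (lin_continuous a) _ (@closed_ge R 0). Qed.

Lemma closed_lin_le0 a : closed [set x | lin a x <= 0].
Proof. by have := (continuous_closedP _).1 (lin_continuous a) _ (@closed_le R 0). Qed.

Lemma linD a x y : lin a (x + y) = lin a x + lin a y.
Proof. by rewrite /lin /=; ring. Qed.

Lemma linZ a k x : lin a (k *: x) = k * lin a x.
Proof. by rewrite /lin /= -![k *: _]/(k * _); ring. Qed.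

Lemma linB a x y : lin a (x - y) = lin a x - lin a y.
Proof. by rewrite /lin /=; ring. Qed.

Lemma lin_segment a x z t : lin a (x + t *: (z - x)) = (1 - t) * lin a x + t * lin a z.
Proof. by rewrite linD linZ linB; ring. Qed.

Lemma lin_self_neq0 {a} : a <> (0, 0, 0) -> lin a a != 0.
Proof.
case: a => [[a1 a2] a3] a_neq0; apply/eqP => aa0; apply: a_neq0.
rewrite /lin /= in aa0; congr (_, _, _); nra.
Qed.

Lemma lin_kernel_proportional {a f} :
  (forall v, lin a v = 0 -> lin f v = 0) -> forall v, lin f v * lin a a = lin f a * lin a v.
Proof.
move=> ker_f v.
have f0 : lin f (lin a a *: v - lin a v *: a) = 0.
  by apply: ker_f; rewrite linB !linZ; ring.
rewrite linB !linZ in f0; apply/eqP; rewrite -subr_eq0; apply/eqP.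
by rewrite -[RHS]f0; ring.
Qed.

Definition cross f g : pt :=
  (f.1.2 * g.2 - f.2 * g.1.2, f.2 * g.1.1 - f.1.1 * g.2, f.1.1 * g.1.2 - f.1.2 * g.1.1).

Lemma cross_eq0_of_common_kernel {a f g} : a <> (0, 0, 0) ->
  (forall v, lin a v = 0 -> lin f v = 0) -> (forall v, lin a v = 0 -> lin g v = 0) ->
  cross f g = (0, 0, 0).
Proof.
move=> /lin_self_neq0 aa_neq0 /lin_kernel_proportional kf /lin_kernel_proportional kg.
have minor v w : lin f v * lin g w = lin f w * lin g v.
  apply: (mulIf (mulf_neq0 aa_neq0 aa_neq0)).
  transitivity ((lin f v * lin a a) * (lin g w * lin a a)); first ring.
  rewrite kf kg; transitivity ((lin f w * lin a a) * (lin g v * lin a a)); last ring.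
  by rewrite kf kg; ring.
have e1 := minor (0, 1, 0) (0, 0, 1); have e2 := minor (0, 0, 1) (1, 0, 0).
have e3 := minor (1, 0, 0) (0, 1, 0).
rewrite /lin /= in e1 e2 e3; rewrite /cross; congr (_, _, _); lra.
Qed.
End Forms.

Section Cones.
Context {R : realType}.
Notation pt := (R * R * R)%type.
Implicit Types (s : seq pt) (a b p q x z : pt).

Definition open_cone s : set pt := [set x | all (fun b => 0 < lin b x) s].
Definition closed_cone s : set pt := [set x | all (fun b => 0 <= lin b x) s].

Lemma open_cone_segment {s x z} {t : R} : closed_cone s x -> open_cone s z -> 0 < t <= 1 ->
  open_cone s (x + t *: (z - x)).
Proof.
move=> /allP x_ge0 /allP z_gt0 /andP[t_gt0 t_le1]; apply/allP => b b_s.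
rewrite lin_segment; apply: ltr_wpDl; last exact: mulr_gt0 (z_gt0 b b_s).
by apply: mulr_ge0; [rewrite subr_ge0 | exact: x_ge0].
Qed.

Lemma open_cone_closed {s x} : open_cone s x -> closed_cone s x.
Proof. by move=> /allP x_gt0; apply/allP => b /x_gt0 /ltW. Qed.

Lemma open_cone_connected {s x} : open_cone s x -> connected (open_cone s).
Proof.
move=> sx; apply: (star_connected sx) => z sz t /andP[t_ge0 t_le1].
have [->|t_gt0] := eqVneq t 0; first by rewrite scale0r addr0.
by apply: open_cone_segment (open_cone_closed sx) sz _; rewrite lt_neqAle eq_sym t_gt0 t_ge0.
Qed.

Lemma closed_cone_sub_closure {s z} : open_cone s z -> closed_cone s `<=` closure (open_cone s).
Proof.
by move=> sz x sx; apply: (closure_segment z) => t t01; exact: open_cone_segment.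
Qed.

Lemma near_hyperplane_closed_cone {s a p} :
  (forall b, b \in s -> 0 < lin b p \/ (forall q, lin a q = 0 -> lin b q = 0)) ->
  \forall q \near p, lin a q = 0 -> closed_cone s q.
Proof.
elim: s => [|b s IHs] bs; first by apply: filterE.
have /IHs s_near : forall c, c \in s -> 0 < lin c p \/ (forall q, lin a q = 0 -> lin c q = 0).
  by move=> c c_s; apply: bs; rewrite inE c_s orbT.
case: (bs b (mem_head _ _)) => [b_gt0|b_kernel].
  have b_near := cvgr_gt _ (lin_continuous b p) _ b_gt0.
  near=> q => aq; apply/andP; split; first by apply: ltW; near: q; exact: b_near.
  by move: aq; near: q; exact: s_near.
near=> q => aq; apply/andP; split; first by rewrite b_kernel.
by move: aq; near: q; exact: s_near.
Unshelve. all: by end_near. Qed.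
End Cones.

Section Walls.
Context {R : realType}.
Notation pt := (R * R * R)%type.
Implicit Types (K : set pt) (s : seq pt) (a f g p : pt).

Lemma chambers_adjacent_sym {K1 K2} : chambers_adjacent K1 K2 -> chambers_adjacent K2 K1.
Proof.
case=> K12 [a [c [p [a_neq0 [ap wall]]]]]; split; first by move/esym.
by exists a, c, p; rewrite setIC.
Qed.

Lemma lin_vanishes_on_wall {S : set pt} {a f p c} :
  lin a p = c -> (\forall q \near p, lin a q = c -> S q) ->
  (forall q, S q -> lin f q = 0) -> forall v, lin a v = 0 -> lin f v = 0.
Proof.
move=> ap wall Sf v av.
have seg_p : (fun t : R => p + t *: v) @ 0 --> p.
  by have := segment_continuous p v 0; rewrite /continuous_at scale0r addr0.
have wall_seg : \forall t \near 0, lin a (p + t *: v) = c -> S (p + t *: v).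
  exact: seg_p _ wall.
have S_seg : \forall t \near 0, S (p + t *: v).
  by apply: filterS wall_seg => t; apply; rewrite linD linZ av mulr0 addr0.
have /filter_ex [t [t_neq0 St]] : \forall t \near 0^', t != 0 /\ S (p + t *: v).
  near=> t; split; near: t; [exact: nbhs_dnbhs_neq | exact: nbhs_dnbhs S_seg].
have := Sf _ St; rewrite linD linZ (Sf _ (nbhs_singleton wall ap)) add0r.
by move/eqP; rewrite mulf_eq0 (negPf t_neq0) => /eqP.
Unshelve. all: by end_near. Qed.

Lemma not_adjacent_of_cross {K1 K2 f g} : cross f g <> (0, 0, 0) ->
  (forall q, closure K1 q -> closure K2 q -> lin f q = 0 /\ lin g q = 0) ->
  ~ chambers_adjacent K1 K2.
Proof.
move=> fg_neq0 meet [_ [a [c [p [a_neq0 [ap wall]]]]]]; apply: fg_neq0.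
apply: (cross_eq0_of_common_kernel a_neq0); apply: (lin_vanishes_on_wall ap wall).
- by move=> q [/meet q1 /q1[]].
- by move=> q [/meet q1 /q1[]].
Qed.

Lemma adjacent_open_cones {s1 s2 a p z1 z2} :
  open_cone s1 <> open_cone s2 -> open_cone s1 z1 -> open_cone s2 z2 ->
  a <> (0, 0, 0) -> lin a p = 0 ->
  (forall b, b \in s1 ++ s2 -> 0 < lin b p \/ (forall q, lin a q = 0 -> lin b q = 0)) ->
  chambers_adjacent (open_cone s1) (open_cone s2).
Proof.
move=> s12 s1z1 s2z2 a_neq0 ap /near_hyperplane_closed_cone wall.
split=> //; exists a, 0, p; do 2 split=> //.
apply: filterS wall => q cq /cq; rewrite /closed_cone /= all_cat => /andP[q1 q2].
by split; [exact: closed_cone_sub_closure s1z1 _ q1 | exact: closed_cone_sub_closure s2z2 _ q2].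
Qed.
End Walls.

Section Chambers.
Context {R : realType}.
Notation pt := (R * R * R)%type.
Local Notation chamber := (@chamber_of R).
Implicit Types (l m : label) (x y : pt) (w : weight).

Definition vec_of_weight w : pt := (w.1.1%:~R, w.1.2%:~R, w.2%:~R).

Lemma pairing_lin w x : pairing w x = lin (vec_of_weight w) x.
Proof. by []. Qed.

Definition facets l : seq pt :=
  match l with
  | L1  => [:: (0, -1, 1); (0, 2, -1); (1, 0, -1)]
  | L2  => [:: (0, 2, -1); (1, -1, 0); (-1, 0, 1)]
  | L3  => [:: (0, -1, 1); (1, 1, -1); (-1, 1, 0)]
  | L4  => [:: (1, 0, 0); (-1, -1, 1); (0, 2, -1)]
  | L1' => [:: (0, 1, -1); (0, -1, 2); (1, -1, 0)]
  | L2' => [:: (0, -1, 2); (1, 0, -1); (-1, 1, 0)]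
  | L3' => [:: (0, 1, -1); (1, -1, 1); (-1, 0, 1)]
  | L4' => [:: (1, 0, 0); (-1, 1, -1); (0, -1, 2)]
  end.

Lemma chamberE l : chamber l = open_cone (facets l).
Proof.
apply/seteqP; split=> x; case: l; rewrite /= /open_cone /lin /psi1 /phi1 /phi2 /= ?andbT.
all: first [ by move=> /and3P[]; lra | by move=> lx; apply/and3P; split; lra ].
Qed.

Lemma chamber_nonempty l : chamber l !=set0.
Proof.
by case: l; [ exists (9, 6, 8) | exists (7, 6, 8) | exists (4, 6, 8) | exists (1, 6, 8)
            | exists (9, 8, 6) | exists (7, 8, 6) | exists (4, 8, 6) | exists (1, 8, 6) ];
  rewrite /= /psi1 /phi1 /phi2 /=; lra.
Qed.

Lemma chamber_connected l : connected (chamber l).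
Proof.
by have [x] := chamber_nonempty l; rewrite chamberE; exact: open_cone_connected.
Qed.

Lemma chamber_signs l x (i : 'I_5) : chamber l x ->
  if nth false (sign_vector l) i
  then 0 < pairing (nth (0, 0, 0)%Z sign_forms i) x
  else pairing (nth (0, 0, 0)%Z sign_forms i) x < 0.
Proof.
case: l => -[h1 [h2 [h3 h4]]]; rewrite /psi1 /phi1 /phi2 in h1 h2 h3 h4.
all: by case: i => [[|[|[|[|[|i]]]]] i_lt5] //=; rewrite /pairing /psi1 /phi1 /phi2 /=; lra.
Qed.

Lemma closure_chamber_signs l x (i : 'I_5) : closure (chamber l) x ->
  if nth false (sign_vector l) i
  then 0 <= pairing (nth (0, 0, 0)%Z sign_forms i) x
  else pairing (nth (0, 0, 0)%Z sign_forms i) x <= 0.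
Proof.
move=> cx; have sign_l y : chamber l y -> _ := chamber_signs l y i.
case: (nth false (sign_vector l) i) in sign_l *.
- by apply: (closure_sub_closed (closed_lin_ge0 (vec_of_weight _)) _ _ cx) => y /sign_l/ltW.
- by apply: (closure_sub_closed (closed_lin_le0 (vec_of_weight _)) _ _ cx) => y /sign_l/ltW.
Qed.

Definition sign_pattern x : seq bool := [seq 0 < pairing w x | w <- sign_forms].

Lemma sign_pattern_chamber {l x} : chamber l x -> sign_pattern x = sign_vector l.
Proof.
move=> lx; apply: (@eq_from_nth _ false); first by rewrite size_map; case: l lx.
rewrite size_map => i i_lt5; rewrite (nth_map (0, 0, 0)%Z) //.
have := chamber_signs l x (Ordinal i_lt5) lx; rewrite /=.
by case: nth => [->|/lt_gtF].
Qed.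

Lemma sign_vector_inj : injective sign_vector.
Proof. by case; case. Qed.

Lemma chamber_label_unique {l m x} : chamber l x -> chamber m x -> l = m.
Proof.
move=> /sign_pattern_chamber lx /sign_pattern_chamber mx.
by apply: sign_vector_inj; rewrite -lx -mx.
Qed.

Lemma sign_forms_weights : {subset sign_forms <= weights_R}.
Proof. by apply/allP. Qed.

Lemma complementE x :
  complement x <-> Weyl x /\ forall w, w \in sign_forms -> pairing w x != 0.
Proof.
split=> [[Wx nz]|[[psi_gt0 [w1 w2]] nz]].
  by split=> // w /sign_forms_weights; exact: nz.
split=> // w; rewrite !inE.
(* the four weights outside [sign_forms] have a constant sign on [Weyl] *)
repeat case/orP; move/eqP->; first [ by apply: nz | rewrite /pairing /= ];
  first [ apply: lt0r_neq0; lra | apply: ltr0_neq0; lra ].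
Qed.

Lemma chamber_sub_complement l : chamber l `<=` @complement R.
Proof.
move=> x lx; apply/complementE; split; first by case: l lx; rewrite /Weyl /=; lra.
move=> w w_in; have i_lt5 : (index w sign_forms < 5)%N by rewrite index_mem.
have := chamber_signs l x (Ordinal i_lt5) lx; rewrite /= nth_index //.
by case: nth; [exact: lt0r_neq0 | exact: ltr0_neq0].
Qed.

Lemma complement_covered {x} : complement x -> exists l, chamber l x.
Proof.
case/complementE => Wx nz.
have sign w : w \in sign_forms -> pairing w x < 0 \/ 0 < pairing w x.
  by move/nz; rewrite neq_lt => /orP.
move: Wx (sign (0, -1, 1)%Z isT) (sign (-1, -1, 1)%Z isT) (sign (-1, 1, 0)%Z isT)
  (sign (1, 0, -1)%Z isT) (sign (1, -1, 1)%Z isT).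
rewrite /Weyl /pairing /= => -[psi_gt0 [w1 w2]] [f1|f1] f2 f3 f4 f5.
- case: f3 => f3; first by exists L1'; rewrite /=; lra.
  case: f4 => f4; last by exists L2'; rewrite /=; lra.
  by case: f5 => f5; [exists L4' | exists L3']; rewrite /=; lra.
- case: f4 => f4; last by exists L1; rewrite /=; lra.
  case: f3 => f3; first by exists L2; rewrite /=; lra.
  by case: f2 => f2; [exists L3 | exists L4]; rewrite /=; lra.
Qed.

Lemma sign_pattern_connected {C : set pt} {x y} : connected C -> C `<=` @complement R ->
  C x -> C y -> sign_pattern x = sign_pattern y.
Proof.
move=> cC C_sub Cx Cy; apply/eq_in_map => w w_in.
apply: (connected_sign_constant cC (lin_continuous (vec_of_weight w))) Cx Cy => z Cz.
by have /complementE[_ /(_ w w_in)] := C_sub z Cz.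
Qed.

Lemma connected_component_chamber {l x} :
  chamber l x -> connected_component (@complement R) x = chamber l.
Proof.
move=> lx; apply/seteqP; split; last first.
  exact: connected_component_max lx (chamber_sub_complement l) (chamber_connected l).
move=> y xy; have [m my] := complement_covered (connected_component_sub xy).
have x_comp := connected_component_refl (chamber_sub_complement _ _ lx).
suff -> : l = m by [].
apply: sign_vector_inj; rewrite -(sign_pattern_chamber lx) -(sign_pattern_chamber my).
exact: sign_pattern_connected (@component_connected _ _ x) (@connected_component_sub _ _ x)
  x_comp xy.
Qed.

Lemma chambersE : [set K | is_chamber K] = range chamber.
Proof.
apply/seteqP; split=> [K [x /complement_covered[l lx] ->]|_ [l _ <-]].
  by exists l => //; rewrite (connected_component_chamber lx).
have [x lx] := chamber_nonempty l.
by exists x; [exact: chamber_sub_complement _ _ lx | rewrite (connected_component_chamber lx)].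
Qed.

Lemma chamber_of_inj : injective chamber.
Proof.
move=> l m lm; have [x lx] := chamber_nonempty l.
by apply: (chamber_label_unique lx); rewrite -lm.
Qed.

Definition sign_flips l m : seq nat :=
  [seq i <- iota 0 5 | nth false (sign_vector l) i != nth false (sign_vector m) i].

Lemma edge_sign_flips l m : edge l m = (size (sign_flips l m) == 1%N).
Proof. by case: l; case: m. Qed.

Lemma sign_flips_nil l m : sign_flips l m = [::] -> l = m.
Proof. by case: l; case: m. Qed.

Lemma sign_forms_independent {i j : 'I_5} : i != j ->
  cross (vec_of_weight (nth (0, 0, 0)%Z sign_forms i))
        (vec_of_weight (nth (0, 0, 0)%Z sign_forms j)) <> (0, 0, 0) :> pt.
Proof.
case: i j => [[|[|[|[|[|i]]]]] ?] [[|[|[|[|[|j]]]]] ?] //= _;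
  rewrite /cross /vec_of_weight /=; case=> *; lra.
Qed.

Lemma flipped_form_vanishes l m (i : 'I_5) x : nat_of_ord i \in sign_flips l m ->
  closure (chamber l) x -> closure (chamber m) x ->
  pairing (nth (0, 0, 0)%Z sign_forms i) x = 0.
Proof.
rewrite mem_filter => /andP[flip _] /closure_chamber_signs sl /closure_chamber_signs sm.
move: flip (sl i) (sm i).
by case: nth; case: nth => //= _ h1 h2; apply/le_anti; rewrite ?h1 ?h2.
Qed.

Lemma not_adjacent_of_flips {l m} : (1 < size (sign_flips l m))%N ->
  ~ chambers_adjacent (chamber l) (chamber m).
Proof.
move=> two_flips.
have flip_lt5 k : k \in sign_flips l m -> (k < 5)%N by rewrite mem_filter mem_iota => /andP[].
have /flip_lt5 i_lt5 : nth 0%N (sign_flips l m) 0 \in sign_flips l m by rewrite mem_nth // ltnW.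
have /flip_lt5 j_lt5 : nth 0%N (sign_flips l m) 1 \in sign_flips l m by rewrite mem_nth.
have flips_uniq : uniq (sign_flips l m) by rewrite filter_uniq ?iota_uniq.
have i_neq_j : Ordinal i_lt5 != Ordinal j_lt5 by rewrite -val_eqE /= nth_uniq // ltnW.
apply: (not_adjacent_of_cross (sign_forms_independent i_neq_j)) => x lx mx.
by split; rewrite -pairing_lin; apply: flipped_form_vanishes lx mx; rewrite mem_nth // ltnW.
Qed.

Lemma adjacent_chambers_of_wall l m (a p : pt) : l <> m -> a <> (0, 0, 0) -> lin a p = 0 ->
  (forall b, b \in facets l ++ facets m -> 0 < lin b p \/ (forall q, lin a q = 0 -> lin b q = 0)) ->
  chambers_adjacent (chamber l) (chamber m).
Proof.
move=> l_neq_m a_neq0 ap facets_p.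
have [z1 lz1] := chamber_nonempty l; have [z2 mz2] := chamber_nonempty m.
rewrite !chamberE in lz1 mz2 *; apply: adjacent_open_cones lz1 mz2 a_neq0 ap facets_p.
by rewrite -!chamberE => /chamber_of_inj.
Qed.

Local Ltac wall_conditions :=
  by [] || (by case=> *; lra) || (by rewrite /lin /=; lra) ||
  (move=> b; rewrite mem_cat !inE; repeat case/orP; move/eqP->;
   by [left; rewrite /lin /=; lra | right=> q; rewrite /lin /=; lra]).

Lemma adjacent_of_edge l m : edge l m -> chambers_adjacent (chamber l) (chamber m).
Proof.
suff adj0 l' m' : edge0 l' m' -> chambers_adjacent (chamber l') (chamber m').
  by case/orP=> [/adj0 | /adj0 /chambers_adjacent_sym].
case: l' m' => -[] // _.
- by apply: (@adjacent_chambers_of_wall L1 L2 (1, 0, -1) (8, 6, 8)); wall_conditions.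
- by apply: (@adjacent_chambers_of_wall L2 L3 (1, -1, 0) (6, 6, 8)); wall_conditions.
- by apply: (@adjacent_chambers_of_wall L3 L4 (1, 1, -1) (2, 6, 8)); wall_conditions.
- by apply: (@adjacent_chambers_of_wall L3 L3' (0, -1, 1) (4, 6, 6)); wall_conditions.
- by apply: (@adjacent_chambers_of_wall L1' L1 (0, 1, -1) (9, 6, 6)); wall_conditions.
- by apply: (@adjacent_chambers_of_wall L2' L1' (1, -1, 0) (8, 8, 6)); wall_conditions.
- by apply: (@adjacent_chambers_of_wall L3' L2' (1, 0, -1) (6, 8, 6)); wall_conditions.
- by apply: (@adjacent_chambers_of_wall L3' L4' (1, -1, 1) (2, 8, 6)); wall_conditions.
Qed.

Lemma chambers_adjacentP l m : chambers_adjacent (chamber l) (chamber m) <-> edge l m.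
Proof.
split=> [adj|]; last exact: adjacent_of_edge.
rewrite edge_sign_flips; case: ltngtP => // [|two_flips]; last first.
  by case: (not_adjacent_of_flips two_flips).
rewrite ltnS leqn0 size_eq0 => /eqP/sign_flips_nil l_eq_m.
by case: adj; rewrite l_eq_m.
Qed.
End Chambers.

Theorem theorem4p1 (R : realType) :
  (* the chambers are exactly the eight listed sets *)
  [set K | is_chamber K] = range (@chamber_of R) /\
  (* the eight listed sets are pairwise distinct (exactly eight chambers) *)
  injective (@chamber_of R) /\
  (* sign vectors w.r.t. the ordered list of forms *)
  (forall (l : label) (x : R * R * R) (i : 'I_5), @chamber_of R l x ->
     if nth false (sign_vector l) i
     then 0 < pairing (nth (0, 0, 0)%Z sign_forms i) x
     else pairing (nth (0, 0, 0)%Z sign_forms i) x < 0) /\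
  (* adjacency graph *)
  (forall l m : label, chambers_adjacent (@chamber_of R l) (@chamber_of R m) <-> edge l m).
Proof.
split; first exact: chambersE.
split; first exact: chamber_of_inj.
split; first exact: chamber_signs.
exact: chambers_adjacentP.
Qed.
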